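(* If $X$ is a Baire space with a locally countable $\pi$-base, then \textsc{Bob} has a winning strategy in the game $\mathsf{BM}_\omega(X)$.
   Context: A Baire space is a space in which countable intersections of dense open sets are dense. A family $\mathcal{B}$ of non-empty open sets of $X$ is a $\pi$-base if every non-empty open set of $X$ contains a member of $\mathcal{B}$; it is locally countable if each member of $\mathcal{B}$ contains only countably many members of $\mathcal{B}$. The game $\mathsf{BM}_\omega(X)$: \textsc{Alice} plays a non-empty open set $A_0$; \textsc{Bob} plays a countable collection $\mathcal{B}_0$ of non-empty open subsets of $A_0$; in inning $n+1$, for each $B \in \mathcal{B}_n$ \textsc{Alice} plays a non-empty open set $A_B \subseteq B$, letting $\mathcal{A}_{n+1}=\{A_B : B\in\mathcal{B}_n\}$, and \textsc{Bob} plays a countable collection $\mathcal{B}_{n+1}$ of non-empty open subsets of $\bigcup\mathcal{A}_{n+1}$. \textsc{Bob} wins if $\bigcap_{n}\bigcup\mathcal{B}_n\neq\emptyset$, otherwise \textsc{Alice} wins. *)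

From HB Require Import structures.
From mathcomp Require Import all_boot.
From mathcomp Require Import boolp classical_sets cardinality topology.

Set Implicit Arguments.
Unset Strict Implicit.
Unset Printing Implicit Defensive.

Local Open Scope classical_set_scope.

Definition baire_space (T : topologicalType) : Prop :=
  forall U : nat -> set T, (forall n, open (U n) /\ dense (U n)) ->
    dense (\bigcap_n U n).

Definition pi_base (T : topologicalType) (B : set (set T)) : Prop :=
  (forall b, B b -> open b /\ b !=set0) /\
  (forall U, open U -> U !=set0 -> exists2 b, B b & b `<=` U).

Definition locally_countable (T : Type) (B : set (set T)) : Prop :=
  forall b, B b -> countable [set c | B c /\ c `<=` b].

(* A strategy for Bob: given Alice's first move A_0 and the list
   [f_1; ...; f_n] of Alice's later moves, it returns Bob's n-th move B_n.
   Alice's move in inning n+1 is the assignment B |-> A_B, represented as a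
   function f_{n+1} : set T -> set T (only its values on B_n matter). *)
Definition bob_strategy (T : topologicalType) :=
  set T -> seq (set T -> set T) -> set (set T).

Section Game.
Variables (T : topologicalType) (sigma : bob_strategy T)
  (A0 : set T) (fs : nat -> (set T -> set T)).

(* Bob's move B_n, where fs k is Alice's move in inning k+1 *)
Definition bob_move (n : nat) : set (set T) := sigma A0 (mkseq fs n).

Definition alice_coll (n : nat) : set (set T) := fs n @` bob_move n.

Definition alice_legal (n : nat) : Prop :=
  forall B, bob_move n B -> [/\ open (fs n B), fs n B !=set0 & fs n B `<=` B].

Definition bob_region (n : nat) : set T :=
  if n is m.+1 then \bigcup_(A in alice_coll m) A else A0.

Definition bob_legal (n : nat) : Prop :=
  countable (bob_move n) /\
  (forall B, bob_move n B -> [/\ open B, B !=set0 & B `<=` bob_region n]).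

End Game.

Definition bob_winning (T : topologicalType) (sigma : bob_strategy T) : Prop :=
  forall (A0 : set T), open A0 -> A0 !=set0 ->
  forall fs : nat -> (set T -> set T),
    (forall n, (forall k, (k < n)%N -> alice_legal sigma A0 fs k) ->
               bob_legal sigma A0 fs n) /\
    ((forall n, alice_legal sigma A0 fs n) ->
       \bigcap_n (\bigcup_(B in bob_move sigma A0 fs n) B) !=set0).

Definition bob_has_winning_strategy (T : topologicalType) : Prop :=
  exists sigma : bob_strategy T, bob_winning sigma.

From mathcomp Require Import all_boot.
From mathcomp Require Import boolp classical_sets cardinality topology.

(* Bob fixes a member b of the locally countable pi-base B inside Alice's
   first set, and in inning n plays every member of B below b that lies in
   the union of Alice's previous answers.  Only countably many members of B
   lie below b, so these moves are legal, and by induction on n every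
   non-empty open subset of b contains one of Bob's n-th sets.  Hence the
   unions of Bob's moves are open and dense in b, and the Baire property of
   X, applied inside the open set b, makes their intersection non-empty. *)

Set Implicit Arguments.
Unset Strict Implicit.
Unset Printing Implicit Defensive.
Local Open Scope classical_set_scope.

Section DenseIn.
Variable T : topologicalType.

Definition dense_in (W S : set T) : Prop :=
  forall O, open O -> O !=set0 -> O `<=` W -> O `&` S !=set0.

Lemma dense_in_setU_setC_closure (W S : set T) :
  open W -> dense_in W S -> dense (S `|` ~` closure W).
Proof.
move=> oW dS O [x Ox] oO.
have [[y [Oy Wy]]|OW0] := pselect (O `&` W !=set0).
  have [z [[Oz _] Sz]] := dS _ (openI oO oW) (ex_intro _ y (conj Oy Wy))
    (@subIsetr _ _ _).
  by exists z; split => //; left.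
exists x; split => //; right => clWx.
have [y [Wy Oy]] := clWx O (open_nbhs_nbhs (conj oO Ox)).
by apply: OW0; exists y.
Qed.

Lemma baire_dense_in_bigcap (W : set T) (U : nat -> set T) :
  baire_space T -> open W -> W !=set0 ->
  (forall n, open (U n) /\ dense_in W (U n)) ->
  W `&` \bigcap_n U n !=set0.
Proof.
move=> baireT oW W0 oUdU.
have oV n : open (U n `|` ~` closure W).
  exact: openU (oUdU n).1 (closed_openC (@closed_closure _ W)).
have dV n : dense (U n `|` ~` closure W).
  exact: dense_in_setU_setC_closure oW (oUdU n).2.
have [x [Wx Vx]] := baireT _ (fun n => conj (oV n) (dV n)) W W0 oW.
exists x; split => // n _.
by case: (Vx n I) => // /(_ (subset_closure Wx)).
Qed.

Lemma pi_base_selector (B : set (set T)) : pi_base B ->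
  exists ch : set T -> set T,
    forall A, open A -> A !=set0 -> B (ch A) /\ ch A `<=` A.
Proof.
move=> [_ Bpi].
have /choice[ch Hch] : forall A : set T,
    exists b, open A -> A !=set0 -> B b /\ b `<=` A.
  move=> A; have [[oA A0]|nA] := pselect (open A /\ A !=set0).
    by have [b Bb bA] := Bpi A oA A0; exists b.
  by exists set0 => oA A0; exfalso; apply: nA.
by exists ch.
Qed.

End DenseIn.

Section PiBaseStrategy.
Variables (T : topologicalType) (B : set (set T)) (ch : set T -> set T).

(* [g k] is Alice's answer in inning [k.+1]; [ch A0] is the member of [B]
   below which Bob plays. *)
Fixpoint pi_move (A0 : set T) (g : nat -> set T -> set T) (n : nat) :
    set (set T) :=
  if n is m.+1 then
    [set c | B c /\ c `<=` ch A0 /\ c `<=` \bigcup_(d in pi_move A0 g m) g m d]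
  else [set c | B c /\ c `<=` ch A0].

Lemma pi_move_ext A0 g h n :
  (forall k, (k < n)%N -> g k = h k) -> pi_move A0 g n = pi_move A0 h n.
Proof.
elim: n => [//|n IH] gh /=.
by rewrite IH ?gh // => k kn; apply/gh/ltnW.
Qed.

Definition pi_strategy : bob_strategy T :=
  fun A0 s => pi_move A0 (nth id s) (size s).

Lemma bob_move_pi_strategy A0 fs n :
  bob_move pi_strategy A0 fs n = pi_move A0 fs n.
Proof.
rewrite /bob_move /pi_strategy size_mkseq.
by apply: pi_move_ext => k kn; rewrite nth_mkseq.
Qed.

Lemma pi_move_below A0 g n c : pi_move A0 g n c -> B c /\ c `<=` ch A0.
Proof. by case: n => [|n] /= [Bc cch] //; case: cch. Qed.

Lemma pi_move_countable A0 g n :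
  locally_countable B -> B (ch A0) -> countable (pi_move A0 g n).
Proof.
move=> Blc Bch; apply: sub_countable (Blc _ Bch).
by apply: subset_card_le => c /pi_move_below.
Qed.

Lemma pi_strategy_legal A0 fs n :
  pi_base B -> locally_countable B -> B (ch A0) -> ch A0 `<=` A0 ->
  bob_legal pi_strategy A0 fs n.
Proof.
move=> [Bop _] Blc Bch chA0; rewrite /bob_legal bob_move_pi_strategy.
split=> [|c Mc]; first exact: pi_move_countable.
have [Bc cch] := pi_move_below Mc.
have [oc c0] := Bop c Bc; split => //.
case: n Mc => [|n] /= [_]; first by move=> _; apply: subset_trans cch chA0.
move=> [_ cfs] x /cfs [d Md fdx]; exists (fs n d) => //.
by exists d; rewrite ?bob_move_pi_strategy.
Qed.

Lemma pi_move_cofinal A0 fs :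
  pi_base B -> (forall n, alice_legal pi_strategy A0 fs n) ->
  forall n U, open U -> U !=set0 -> U `<=` ch A0 ->
  exists2 c, pi_move A0 fs n c & c `<=` U.
Proof.
move=> [_ Bpi] aliceP; elim=> [|n IH] U oU U0 Uch.
  have [c Bc cU] := Bpi U oU U0.
  by exists c => //; split => //; apply: subset_trans Uch.
have [c Mc cU] := IH U oU U0 Uch.
have [|ofc fc0 fcc] := aliceP n c; first by rewrite bob_move_pi_strategy.
have [d Bd dfc] := Bpi _ ofc fc0.
have dU : d `<=` U := subset_trans (subset_trans dfc fcc) cU.
exists d => //; split=> //; split; first exact: subset_trans dU Uch.
by move=> x /dfc fcx; exists c.
Qed.

Lemma pi_move_dense_in A0 fs n :
  pi_base B -> (forall k, alice_legal pi_strategy A0 fs k) ->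
  open (\bigcup_(c in pi_move A0 fs n) c) /\
  dense_in (ch A0) (\bigcup_(c in pi_move A0 fs n) c).
Proof.
move=> Bpi aliceP; split.
  by apply: bigcup_open => c /pi_move_below [/Bpi.1 []].
move=> O oO O0 Och.
have [c Mc cO] := pi_move_cofinal Bpi aliceP n oO O0 Och.
have [x cx] := (Bpi.1 c (pi_move_below Mc).1).2.
by exists x; split; [apply: cO | exists c].
Qed.

End PiBaseStrategy.

Theorem theorem3p8 (X : topologicalType) :
  baire_space X ->
  (exists B : set (set X), pi_base B /\ locally_countable B) ->
  bob_has_winning_strategy X.
Proof.
move=> baireX [B [Bpi Blc]].
have [ch chP] := pi_base_selector Bpi.
exists (pi_strategy B ch) => A0 oA0 A00 fs.
have [Bch chA0] := chP A0 oA0 A00.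
split=> [n _|aliceP]; first exact: pi_strategy_legal.
have [och ch0] := Bpi.1 _ Bch.
have [x [_ Mx]] := baire_dense_in_bigcap baireX och ch0
  (fun n => pi_move_dense_in n Bpi aliceP).
by exists x => n _; rewrite bob_move_pi_strategy; apply: Mx.
Qed.
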